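(* Let $\mathcal T$ be an MPS with $n$ sites and nonzero contraction, and let $\mathcal C$ be an MPS with the same contraction which is in (left-)canonical form centered at site $n$, with all bond dimensions of $\mathcal C$ at most $D$. Then, up to $O(\epsilon^2)$ as $\epsilon\to0$, $$\sup_{\beta}\mathscr E_r(\mathcal C,\beta)\le\frac{1+(n-1)\sqrt D}{n}\,\sup_{\alpha}\mathscr E_r(\mathcal T,\alpha),$$ where the suprema run over $\epsilon$-perturbations $\beta$ of $\mathcal C$ and $\alpha$ of $\mathcal T$. Moreover, when all bond dimensions equal $D$, the factor $\frac{1+(n-1)\sqrt D}{n}$ cannot be improved (as a function of $n$ and $D$).
   Context: MPS: an MPS with $n$ sites is a tensor network on a path: site $j$ carries a physical (uncontracted) leg $p_j$, and for $1\le j\le n-1$ a bond (contracted leg) $b_j$ of dimension $D_j$ joins sites $j$ and $j+1$; site tensors have legs $(p_1,b_1)$, $(b_{j-1},p_j,b_j)$ for $1<j<n$, and $(b_{n-1},p_n)$. The contraction sums over all bond indices the product of the site entries. An MPS $(\mathbf C^{(1)},\dots,\mathbf C^{(n)})$ is in (left-)canonical form centered at site $n$ if for every $j\le n-1$ the matricization of $\mathbf C^{(j)}$ with rows indexed by $(b_{j-1},p_j)$ (just $p_1$ for $j=1$) and columns by $b_j$ is an isometry. An $\epsilon$-perturbation of an MPS with sites $\mathbf T^{(i)}$ is a tuple $(\delta^{(i)})$, $\delta^{(i)}$ of the shape of $\mathbf T^{(i)}$, with $\|\delta^{(i)}\|_F\le\epsilon\|\mathbf T^{(i)}\|_F$;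 $\mathscr E_r$ denotes $\|\hat{\mathbf T}-\mathbf T\|_F/\|\mathbf T\|_F$ where $\hat{\mathbf T}$ is the contraction of the perturbed sites. $\|\cdot\|_F$ Frobenius norm. *)

From Stdlib Require Import Reals Lra Lia Arith.
Open Scope R_scope.

Fixpoint fsum (m : nat) (f : nat -> R) : R :=
  match m with
  | O => 0
  | S k => fsum k f + f k
  end.

Definition upd (p : nat -> nat) (k x : nat) : nat -> nat :=
  fun j => if Nat.eqb j k then x else p j.

(* msum n d F = sum of F p over all multi-indices p with p j < d j for j < n
   (and p j = 0 for j >= n). *)
Fixpoint msum (n : nat) (d : nat -> nat) (F : (nat -> nat) -> R) : R :=
  match n with
  | O => F (fun _ => O)
  | S k => msum k d (fun p => fsum (d k) (fun x => F (upd p k x)))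
  end.

(* An MPS with n sites, numbered 0 .. n-1.
   Physical dimensions: d : nat -> nat (site j has physical dimension d j).
   Bond dimensions: Db : nat -> nat, where bond j (1 <= j <= n-1) joins
   sites j-1 and j (0-based) and has dimension Db j; the boundary
   "bonds" 0 and n are dummy legs of dimension 1 (see bonds_ok), so that
   site 0 effectively has legs (p, b_1) and site n-1 legs (b_{n-1}, p).
   Site tensor of site j : A j a x b, with a < Db j (left bond),
   x < d j (physical), b < Db (S j) (right bond). *)
Definition site := nat -> nat -> nat -> R.
Definition mps := nat -> site.

Definition bonds_ok (n : nat) (Db : nat -> nat) : Prop :=
  Db O = 1%nat /\ Db n = 1%nat.

Fixpoint contr_vec (Db : nat -> nat) (A : mps) (p : nat -> nat) (k : nat)
  : nat -> R :=
  match k with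
  | O => fun b => if Nat.eqb b 0 then 1 else 0
  | S k' => fun b => fsum (Db k') (fun a => contr_vec Db A p k' a * A k' a (p k') b)
  end.

Definition contract (n : nat) (Db : nat -> nat) (A : mps) (p : nat -> nat) : R :=
  contr_vec Db A p n O.

Definition site_norm (dl dp dr : nat) (S : site) : R :=
  sqrt (fsum dl (fun a => fsum dp (fun x => fsum dr (fun b => (S a x b) ^ 2)))).

Definition site_norm_at (d Db : nat -> nat) (A : mps) (j : nat) : R :=
  site_norm (Db j) (d j) (Db (S j)) (A j).

Definition contr_norm (n : nat) (d Db : nat -> nat) (A : mps) : R :=
  sqrt (msum n d (fun p => (contract n Db A p) ^ 2)).

Definition contr_dist (n : nat) (d Db1 : nat -> nat) (A1 : mps)
  (Db2 : nat -> nat) (A2 : mps) : R :=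
  sqrt (msum n d (fun p => (contract n Db1 A1 p - contract n Db2 A2 p) ^ 2)).

Definition nonzero_contraction (n : nat) (d Db : nat -> nat) (A : mps) : Prop :=
  exists p, (forall j, (j < n)%nat -> (p j < d j)%nat) /\ contract n Db A p <> 0.

Definition same_contraction (n : nat) (d Db1 : nat -> nat) (A1 : mps)
  (Db2 : nat -> nat) (A2 : mps) : Prop :=
  forall p, (forall j, (j < n)%nat -> (p j < d j)%nat) ->
    contract n Db1 A1 p = contract n Db2 A2 p.

(* Left-canonical form centered at the last site: for every site j except
   the last one, the matricization with rows (left bond, physical) and
   columns (right bond) is an isometry, i.e. M^T M = I. *)
Definition left_canonical (n : nat) (d Db : nat -> nat) (C : mps) : Prop :=
  forall j, (S j < n)%nat ->
    forall b b', (b < Db (S j))%nat -> (b' < Db (S j))%nat ->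
      fsum (Db j) (fun a => fsum (d j) (fun x => C j a x b * C j a x b'))
      = if Nat.eqb b b' then 1 else 0.

Definition is_perturbation (n : nat) (d Db : nat -> nat) (A : mps) (eps : R)
  (delta : mps) : Prop :=
  forall j, (j < n)%nat ->
    site_norm_at d Db delta j <= eps * site_norm_at d Db A j.

Definition perturb (A delta : mps) : mps :=
  fun j a x b => A j a x b + delta j a x b.

Definition rel_err (n : nat) (d Db : nat -> nat) (A delta : mps) : R :=
  contr_dist n d Db (perturb A delta) Db A / contr_norm n d Db A.

Definition err_set (n : nat) (d Db : nat -> nat) (A : mps) (eps : R) : R -> Prop :=
  fun r => exists delta, is_perturbation n d Db A eps delta /\
                         r = rel_err n d Db A delta.

Definition factor (n D : nat) : R :=
  (1 + INR (n - 1) * sqrt (INR D)) / INR n.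

Definition sup_bound_up_to_O_eps2 (n : nat) (d DC : nat -> nat) (C : mps)
  (DT : nat -> nat) (T : mps) (c : R) : Prop :=
  exists K eps0, 0 < eps0 /\
    forall eps, 0 < eps < eps0 ->
      forall sC sT, is_lub (err_set n d DC C eps) sC ->
                    is_lub (err_set n d DT T eps) sT ->
                    sC <= c * sT + K * eps ^ 2.

(* Let H_j be the canonical MPS C with its first j sites perturbed.  The error
   telescopes as the sum over j of contract H_(j+1) - contract H_j, and the j-th
   term factors through bond j+1 as (left part) * (right part).  In left-canonical
   form the left environments of C (partial contractions up to a bond) are
   orthonormal, so to first order the left part is the perturbation delta_j of
   site j seen through an isometry (norm <= eps ||C_j||), and the right part has
   norm ||C|| for an inner site and 1 for the last one.  Since ||C_j||^2 is the
   bond dimension for an inner site and ||C_(n-1)|| = ||C||, the relative error is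
   at most eps (1 + (n-1) sqrt D) + O(eps^2); the O(eps^2) comes from the left
   environments of the perturbed sites, whose deviation grows at most
   geometrically.  Scaling every site of T by 1 + eps is an eps-perturbation with
   relative error (1+eps)^n - 1 >= n eps, which gives the factor.
   For sharpness, take the product state T = e_0 (x) e_0 (x) ... with the first
   physical leg of dimension D, and the canonical C that carries the first
   physical index along bonds of dimension D: perturbing each inner site of C by
   eps sqrt D on the entry (0,0,0) and the last site by eps C_(n-1) multiplies
   the contraction by (1+eps)(1 + eps sqrt D)^(n-1), while T is itself
   left-canonical with bond dimension 1, so its errors are at most n eps + O(eps^2). *)

From Stdlib Require Import Reals.
From Stdlib Require Import Lra Lia Arith FunctionalExtensionality.
Open Scope R_scope.

(** * Finite sums and inequalities *)

Lemma fsum_ext N f g : (forall i, (i < N)%nat -> f i = g i) -> fsum N f = fsum N g.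
Proof.
  induction N; simpl; intros H; auto.
  rewrite IHN, H by (intros; try apply H; lia). reflexivity.
Qed.

Lemma fsum_plus N f g : fsum N (fun i => f i + g i) = fsum N f + fsum N g.
Proof. induction N; simpl; [lra | rewrite IHN; lra]. Qed.

Lemma fsum_minus N f g : fsum N (fun i => f i - g i) = fsum N f - fsum N g.
Proof. induction N; simpl; [lra | rewrite IHN; lra]. Qed.

Lemma fsum_scal N c f : fsum N (fun i => c * f i) = c * fsum N f.
Proof. induction N; simpl; [lra | rewrite IHN; lra]. Qed.

Lemma fsum_scal_r N c f : fsum N (fun i => f i * c) = fsum N f * c.
Proof. induction N; simpl; [lra | rewrite IHN; lra]. Qed.

Lemma fsum_zero N : fsum N (fun _ => 0) = 0.
Proof. induction N; simpl; [lra | rewrite IHN; lra]. Qed.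

Lemma fsum_const N c : fsum N (fun _ => c) = INR N * c.
Proof. induction N; simpl fsum; [simpl; lra | rewrite IHN, S_INR; lra]. Qed.

Lemma fsum_1 f : fsum 1 f = f O.
Proof. simpl. ring. Qed.

Lemma fsum_last N f : (1 <= N)%nat -> fsum N f = fsum (N - 1) f + f (N - 1)%nat.
Proof. intros. destruct N; [lia |]. simpl. rewrite Nat.sub_0_r. reflexivity. Qed.

Lemma fsum_telescope N f : fsum N (fun j => f (S j) - f j) = f N - f O.
Proof. induction N; simpl; [lra | rewrite IHN; lra]. Qed.

Lemma fsum_le N f g : (forall i, (i < N)%nat -> f i <= g i) -> fsum N f <= fsum N g.
Proof.
  induction N; simpl; intros H; [lra |].
  apply Rplus_le_compat; [apply IHN; intros |]; apply H; lia.
Qed.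

Lemma fsum_nonneg N f : (forall i, (i < N)%nat -> 0 <= f i) -> 0 <= fsum N f.
Proof. intros H. rewrite <- (fsum_zero N). apply fsum_le. exact H. Qed.

Lemma fsum_term_le N f k :
  (k < N)%nat -> (forall i, (i < N)%nat -> 0 <= f i) -> f k <= fsum N f.
Proof.
  induction N; intros Hk H; [lia |]. simpl.
  destruct (Nat.eq_dec k N) as [-> | Hne].
  - assert (0 <= fsum N f) by (apply fsum_nonneg; intros; apply H; lia). lra.
  - assert (f k <= fsum N f) by (apply IHN; [lia | intros; apply H; lia]).
    specialize (H N ltac:(lia)). lra.
Qed.

Lemma fsum_swap N M F :
  fsum N (fun i => fsum M (fun j => F i j)) = fsum M (fun j => fsum N (fun i => F i j)).
Proof. induction N; simpl; [rewrite fsum_zero; auto | rewrite IHN, <- fsum_plus; auto]. Qed.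

Lemma fsum_swap3 N1 N2 N3 G :
  fsum N1 (fun x => fsum N2 (fun b => fsum N3 (fun a => G x b a))) =
  fsum N3 (fun a => fsum N1 (fun x => fsum N2 (fun b => G x b a))).
Proof.
  rewrite (fsum_ext N1 _ (fun x => fsum N3 (fun a => fsum N2 (fun b => G x b a))))
    by (intros; apply fsum_swap).
  apply fsum_swap.
Qed.

Lemma fsum_swap4 N1 N2 N3 N4 G :
  fsum N1 (fun x => fsum N2 (fun b => fsum N3 (fun a => fsum N4 (fun a' => G x b a a')))) =
  fsum N3 (fun a => fsum N4 (fun a' => fsum N1 (fun x => fsum N2 (fun b => G x b a a')))).
Proof. rewrite fsum_swap3. apply fsum_ext. intros a _. apply fsum_swap3. Qed.

Lemma fsum_prod N M f g :
  fsum N f * fsum M g = fsum N (fun a => fsum M (fun a' => f a * g a')).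
Proof. rewrite <- fsum_scal_r. apply fsum_ext. intros. rewrite fsum_scal. reflexivity. Qed.

Lemma fsum_sq N f : (fsum N f) ^ 2 = fsum N (fun a => fsum N (fun a' => f a * f a')).
Proof. rewrite <- fsum_prod. ring. Qed.

Lemma fsum_delta N i f :
  (i < N)%nat -> fsum N (fun a => (if Nat.eqb i a then 1 else 0) * f a) = f i.
Proof.
  induction N; intros Hi; [lia |]. simpl.
  destruct (Nat.eqb_spec i N) as [-> | Hne].
  - rewrite (fsum_ext _ _ (fun _ => 0)), fsum_zero; [lra |].
    intros a Ha. destruct (Nat.eqb_spec N a); [lia | lra].
  - rewrite IHN by lia. lra.
Qed.

Lemma fsum_delta_sym N i f :
  (i < N)%nat -> fsum N (fun a => (if Nat.eqb a i then 1 else 0) * f a) = f i.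
Proof.
  intros. rewrite <- (fsum_delta N i f) by auto.
  apply fsum_ext. intros. rewrite Nat.eqb_sym. reflexivity.
Qed.

Lemma quadratic_discriminant A B C :
  (forall t, 0 <= A + 2 * t * B + t ^ 2 * C) -> 0 <= A -> 0 <= C -> B ^ 2 <= A * C.
Proof.
  intros H HA HC. destruct (Req_dec C 0) as [-> | HC0].
  - destruct (Req_dec B 0) as [-> | HB0]; [nra |].
    specialize (H (- (A + 1) / (2 * B))).
    assert (2 * (- (A + 1) / (2 * B)) * B = - (A + 1)) by (field; auto). nra.
  - specialize (H (- B / C)).
    assert ((- B / C) * C = - B) by (field; lra).
    set (t := - B / C) in *. nra.
Qed.

Lemma sqrt_le_of_sq x y : 0 <= y -> x <= y * y -> sqrt x <= y.
Proof. intros. rewrite <- (sqrt_square y) by auto. apply sqrt_le_1_alt. auto. Qed.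

Section PositiveFunctional.

Variable X : Type.
Variable phi : (X -> R) -> R.
Hypothesis phi_plus : forall f g, phi (fun x => f x + g x) = phi f + phi g.
Hypothesis phi_scal : forall c f, phi (fun x => c * f x) = c * phi f.
Hypothesis phi_nonneg : forall f, (forall x, 0 <= f x) -> 0 <= phi f.

Lemma phi_ext f g : (forall x, f x = g x) -> phi f = phi g.
Proof. intros H. f_equal. extensionality x. auto. Qed.

Lemma phi_zero : phi (fun _ => 0) = 0.
Proof.
  rewrite (phi_ext _ (fun _ => 0 * 0)) by (intros; ring).
  rewrite (phi_scal 0 (fun _ => 0)). ring.
Qed.

Lemma phi_sq_nonneg f : 0 <= phi (fun x => f x ^ 2).
Proof. apply phi_nonneg. intros. apply pow2_ge_0. Qed.

Lemma phi_Cauchy_Schwarz f g :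
  (phi (fun x => f x * g x)) ^ 2 <= phi (fun x => f x ^ 2) * phi (fun x => g x ^ 2).
Proof.
  apply quadratic_discriminant; try apply phi_sq_nonneg.
  intros t. pose proof (phi_sq_nonneg (fun x => f x + t * g x)) as H.
  rewrite (phi_ext _ (fun x => f x ^ 2 + ((2 * t) * (f x * g x) + t ^ 2 * g x ^ 2))) in H
    by (intros; ring).
  rewrite !phi_plus, !phi_scal in H. lra.
Qed.

Lemma phi_Minkowski f g :
  sqrt (phi (fun x => (f x + g x) ^ 2)) <=
  sqrt (phi (fun x => f x ^ 2)) + sqrt (phi (fun x => g x ^ 2)).
Proof.
  set (A := phi (fun x => f x ^ 2)). set (C := phi (fun x => g x ^ 2)).
  set (B := phi (fun x => f x * g x)).
  assert (HA : 0 <= A) by apply phi_sq_nonneg.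
  assert (HC : 0 <= C) by apply phi_sq_nonneg.
  assert (HB : B ^ 2 <= A * C) by apply phi_Cauchy_Schwarz.
  rewrite (phi_ext _ (fun x => f x ^ 2 + (2 * (f x * g x) + g x ^ 2))) by (intros; ring).
  rewrite !phi_plus, phi_scal. fold A B C.
  pose proof (sqrt_pos A). pose proof (sqrt_pos C).
  assert (B <= sqrt A * sqrt C).
  { destruct (Rle_or_lt B 0); [nra |].
    rewrite <- sqrt_mult, <- (sqrt_square B) by lra. apply sqrt_le_1_alt. nra. }
  apply sqrt_le_of_sq; [lra |].
  pose proof (sqrt_sqrt A HA). pose proof (sqrt_sqrt C HC). nra.
Qed.

Lemma phi_Minkowski_sum N (F : nat -> X -> R) :
  sqrt (phi (fun x => (fsum N (fun j => F j x)) ^ 2)) <=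
  fsum N (fun j => sqrt (phi (fun x => (F j x) ^ 2))).
Proof.
  induction N; cbn [fsum].
  - rewrite (phi_ext _ (fun _ => 0)) by (intros; ring). rewrite phi_zero, sqrt_0. lra.
  - eapply Rle_trans; [apply (phi_Minkowski (fun x => fsum N (fun j => F j x)) (F N)) | lra].
Qed.

End PositiveFunctional.

Lemma fsum_Cauchy_Schwarz N f g :
  (fsum N (fun i => f i * g i)) ^ 2 <= fsum N (fun i => f i ^ 2) * fsum N (fun i => g i ^ 2).
Proof.
  apply (phi_Cauchy_Schwarz nat (fsum N)).
  - intros. apply fsum_plus.
  - intros. apply fsum_scal.
  - intros. apply fsum_nonneg. auto.
Qed.

(** * Sums over multi-indices *)

Lemma upd_same p i x : upd p i x i = x.
Proof. unfold upd. rewrite Nat.eqb_refl. reflexivity. Qed.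

Lemma upd_other p i x j : j <> i -> upd p i x j = p j.
Proof. unfold upd. intros. destruct (Nat.eqb_spec j i); auto; lia. Qed.

Lemma upd_comm p i x j y : i <> j -> upd (upd p i x) j y = upd (upd p j y) i x.
Proof.
  intros. extensionality k. unfold upd.
  destruct (Nat.eqb_spec k j), (Nat.eqb_spec k i); auto; lia.
Qed.

Lemma upd_upd p i x y : upd (upd p i x) i y = upd p i y.
Proof. extensionality k. unfold upd. destruct (Nat.eqb_spec k i); auto. Qed.

Lemma upd_id p i : upd p i (p i) = p.
Proof. extensionality k. unfold upd. destruct (Nat.eqb_spec k i); subst; auto. Qed.

Lemma msum_ext n d F G : (forall p, F p = G p) -> msum n d F = msum n d G.
Proof. intros H. f_equal. extensionality p. auto. Qed.

Lemma msum_plus n d F G : msum n d (fun p => F p + G p) = msum n d F + msum n d G.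
Proof.
  revert F G; induction n; intros; simpl; auto.
  rewrite <- IHn. apply msum_ext. intros. apply fsum_plus.
Qed.

Lemma msum_scal n d c F : msum n d (fun p => c * F p) = c * msum n d F.
Proof.
  revert F; induction n; intros; simpl; auto.
  rewrite <- IHn. apply msum_ext. intros. apply fsum_scal.
Qed.

Lemma msum_scal_r n d c F : msum n d (fun p => F p * c) = msum n d F * c.
Proof. rewrite (msum_ext _ _ _ (fun p => c * F p)), msum_scal by (intros; ring). ring. Qed.

Lemma msum_zero n d : msum n d (fun _ => 0) = 0.
Proof. rewrite (msum_ext _ _ _ (fun _ => 0 * 0)), msum_scal by (intros; ring). ring. Qed.

Lemma msum_nonneg n d F : (forall p, 0 <= F p) -> 0 <= msum n d F.
Proof.
  revert F; induction n; intros; simpl; auto.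
  apply IHn. intros. apply fsum_nonneg. auto.
Qed.

Lemma msum_le n d F G : (forall p, F p <= G p) -> msum n d F <= msum n d G.
Proof.
  intros H. rewrite (msum_ext n d G (fun p => F p + (G p - F p))), msum_plus by (intros; ring).
  assert (0 <= msum n d (fun p => G p - F p))
    by (apply msum_nonneg; intros p; specialize (H p); lra).
  lra.
Qed.

Lemma msum_fsum n d N F :
  msum n d (fun p => fsum N (fun i => F i p)) = fsum N (fun i => msum n d (F i)).
Proof. induction N; simpl; [apply msum_zero | rewrite msum_plus, IHN; reflexivity]. Qed.

Lemma msum_Minkowski_sum n d N (F : nat -> (nat -> nat) -> R) :
  sqrt (msum n d (fun p => (fsum N (fun j => F j p)) ^ 2)) <=
  fsum N (fun j => sqrt (msum n d (fun p => (F j p) ^ 2))).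
Proof. exact (phi_Minkowski_sum _ _ (msum_plus n d) (msum_scal n d) (msum_nonneg n d) N F). Qed.

Lemma msum_fsum_Minkowski k d N (V V' : (nat -> nat) -> nat -> R) :
  sqrt (msum k d (fun p => fsum N (fun b => (V p b + V' p b) ^ 2))) <=
  sqrt (msum k d (fun p => fsum N (fun b => (V p b) ^ 2))) +
  sqrt (msum k d (fun p => fsum N (fun b => (V' p b) ^ 2))).
Proof.
  exact (phi_Minkowski _ (fun F => msum k d (fun p => fsum N (fun b => F (p, b))))
    ltac:(intros; cbv beta; rewrite <- msum_plus; apply msum_ext; intros; apply fsum_plus)
    ltac:(intros; cbv beta; rewrite <- msum_scal; apply msum_ext; intros; apply fsum_scal)
    ltac:(intros; cbv beta; apply msum_nonneg; intros; apply fsum_nonneg; auto)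
    (fun x => V (fst x) (snd x)) (fun x => V' (fst x) (snd x))).
Qed.

(* [psum lo m d F p] sums [F] over the coordinates [lo, lo + m) of the multi-index,
   the other coordinates being those of [p]. *)
Definition sum_coord (k : nat) (d : nat -> nat) (F : (nat -> nat) -> R) : (nat -> nat) -> R :=
  fun p => fsum (d k) (fun x => F (upd p k x)).

Fixpoint psum (lo m : nat) (d : nat -> nat) (F : (nat -> nat) -> R) : (nat -> nat) -> R :=
  match m with
  | O => F
  | S m' => psum lo m' d (sum_coord (lo + m') d F)
  end.

Definition zero_index : nat -> nat := fun _ => O.

Lemma msum_psum n d F : msum n d F = psum 0 n d F zero_index.
Proof. revert F; induction n; intros; simpl; auto. Qed.

Lemma psum_split lo k m d F : psum lo (k + m) d F = psum lo k d (psum (lo + k) m d F).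
Proof.
  revert F; induction m; intros.
  - rewrite Nat.add_0_r. reflexivity.
  - rewrite Nat.add_succ_r. simpl. rewrite IHm, Nat.add_assoc. reflexivity.
Qed.

Lemma psum_ext lo m d F G : (forall p, F p = G p) -> psum lo m d F = psum lo m d G.
Proof. intros H. f_equal. extensionality p. auto. Qed.

Lemma psum_plus lo m d F G p :
  psum lo m d (fun q => F q + G q) p = psum lo m d F p + psum lo m d G p.
Proof.
  revert F G p; induction m; intros; simpl; auto.
  rewrite <- IHm. f_equal. f_equal. extensionality q. apply fsum_plus.
Qed.

Lemma psum_zero lo m d p : psum lo m d (fun _ => 0) p = 0.
Proof.
  revert p; induction m; intros; simpl; auto.
  rewrite (psum_ext _ _ _ _ (fun _ => 0)); auto. intros. apply fsum_zero.
Qed.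

Lemma psum_fsum lo m d N F p :
  psum lo m d (fun q => fsum N (fun i => F i q)) p = fsum N (fun i => psum lo m d (F i) p).
Proof. induction N; simpl; [apply psum_zero | rewrite psum_plus, IHN; reflexivity]. Qed.

Lemma psum_nonneg lo m d F p : (forall q, 0 <= F q) -> 0 <= psum lo m d F p.
Proof.
  revert F p; induction m; intros; simpl; auto.
  apply IHm. intros. apply fsum_nonneg. auto.
Qed.

Lemma psum_mul_invariant lo m d f g p :
  (forall q i x, (lo <= i < lo + m)%nat -> f (upd q i x) = f q) ->
  psum lo m d (fun q => f q * g q) p = f p * psum lo m d g p.
Proof.
  revert g p; induction m; intros g p Hf; simpl; auto.
  rewrite (psum_ext _ _ _ _ (fun q => f q * sum_coord (lo + m)%nat d g q)).
  - apply IHm. intros. apply Hf. lia.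
  - intros q. unfold sum_coord. rewrite <- fsum_scal.
    apply fsum_ext. intros. rewrite Hf by lia. reflexivity.
Qed.

Lemma psum_upd_invariant lo m d g :
  (forall q i x, (i < lo)%nat -> g (upd q i x) = g q) ->
  forall q i x, (i < lo)%nat -> psum lo m d g (upd q i x) = psum lo m d g q.
Proof.
  revert g; induction m; intros g Hg; simpl; auto.
  apply IHm. intros. unfold sum_coord. apply fsum_ext. intros.
  rewrite upd_comm by lia. auto.
Qed.

Lemma msum_split k m d f g :
  (forall q i x, (k <= i)%nat -> f (upd q i x) = f q) ->
  (forall q i x, (i < k)%nat -> g (upd q i x) = g q) ->
  msum (k + m) d (fun p => f p * g p) = msum k d f * psum k m d g zero_index.
Proof.
  intros Hf Hg. rewrite !msum_psum, psum_split. simpl (0 + k)%nat.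
  assert (E : psum k m d (fun q => f q * g q) = fun q => psum k m d g q * f q).
  { extensionality q. rewrite psum_mul_invariant by (intros; apply Hf; lia). ring. }
  rewrite E, psum_mul_invariant; [ring |].
  intros. apply psum_upd_invariant; auto. lia.
Qed.

(* [msum n d] evaluates its argument only at multi-indices vanishing from [n] on. *)
Definition valid (n : nat) (d : nat -> nat) (p : nat -> nat) : Prop :=
  (forall j, (j < n)%nat -> (p j < d j)%nat) /\ (forall j, (n <= j)%nat -> p j = O).

Lemma psum_ge lo m d F p p' :
  (forall q, 0 <= F q) ->
  (forall i, (lo <= i < lo + m)%nat -> (p' i < d i)%nat) ->
  (forall i, ~ (lo <= i < lo + m)%nat -> p' i = p i) ->
  F p' <= psum lo m d F p.
Proof.
  revert F p'; induction m; intros F p' HF H1 H2; simpl.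
  - replace p' with p; [lra |]. extensionality i. rewrite H2; auto. lia.
  - set (k := (lo + m)%nat).
    apply Rle_trans with (sum_coord k d F (upd p' k (p k))).
    + unfold sum_coord. rewrite <- (upd_id p' k) at 1.
      rewrite (fsum_ext _ _ (fun x => F (upd p' k x))) by (intros; rewrite upd_upd; auto).
      apply (fsum_term_le _ (fun x => F (upd p' k x))); [apply H1; lia | auto].
    + apply IHm.
      * intros. apply fsum_nonneg. auto.
      * intros. rewrite upd_other by lia. apply H1. lia.
      * intros i Hi. destruct (Nat.eq_dec i k) as [-> | Hik]; [apply upd_same |].
        rewrite upd_other by auto. apply H2. lia.
Qed.

Lemma msum_ge n d F p : (forall q, 0 <= F q) -> valid n d p -> F p <= msum n d F.
Proof.
  intros HF [H1 H2]. rewrite msum_psum. apply psum_ge; auto.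
  - intros. apply H1. lia.
  - intros. apply H2. lia.
Qed.

Lemma psum_ext_valid lo m d F G p :
  (forall p', (forall i, (lo <= i < lo + m)%nat -> (p' i < d i)%nat) ->
     (forall i, ~ (lo <= i < lo + m)%nat -> p' i = p i) -> F p' = G p') ->
  psum lo m d F p = psum lo m d G p.
Proof.
  revert F G p; induction m; intros F G p H; simpl.
  - apply H; auto. intros; lia.
  - apply IHm. intros p' H1 H2. apply fsum_ext. intros x Hx. apply H.
    + intros i Hi. destruct (Nat.eq_dec i (lo + m)%nat) as [-> | Hne].
      * rewrite upd_same. auto.
      * rewrite upd_other by auto. apply H1. lia.
    + intros. rewrite upd_other by lia. apply H2. lia.
Qed.

Lemma msum_ext_valid n d F G :
  (forall p, valid n d p -> F p = G p) -> msum n d F = msum n d G.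
Proof.
  intros H. rewrite !msum_psum. apply psum_ext_valid. intros p' H1 H2.
  apply H. split; intros; [apply H1 | rewrite H2]; auto; lia.
Qed.

(** * Site norms and partial contractions *)

Definition site_sq_norm (dl dp dr : nat) (A : site) : R :=
  fsum dl (fun a => fsum dp (fun x => fsum dr (fun b => (A a x b) ^ 2))).

Lemma site_norm_eq_sqrt dl dp dr A : site_norm dl dp dr A = sqrt (site_sq_norm dl dp dr A).
Proof. reflexivity. Qed.

Lemma site_sq_norm_nonneg dl dp dr A : 0 <= site_sq_norm dl dp dr A.
Proof. unfold site_sq_norm. repeat (apply fsum_nonneg; intros). apply pow2_ge_0. Qed.

Lemma site_norm_at_nonneg d Db (A : mps) j : 0 <= site_norm_at d Db A j.
Proof. apply sqrt_pos. Qed.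

Lemma site_sq_norm_scal dl dp dr c A :
  site_sq_norm dl dp dr (fun a x b => c * A a x b) = c ^ 2 * site_sq_norm dl dp dr A.
Proof.
  unfold site_sq_norm. rewrite <- fsum_scal. apply fsum_ext; intros.
  rewrite <- fsum_scal. apply fsum_ext; intros.
  rewrite <- fsum_scal. apply fsum_ext; intros. ring.
Qed.

Lemma site_norm_scal dl dp dr c A :
  0 <= c -> site_norm dl dp dr (fun a x b => c * A a x b) = c * site_norm dl dp dr A.
Proof.
  intros Hc. rewrite !site_norm_eq_sqrt, site_sq_norm_scal, sqrt_mult, sqrt_pow2;
    auto using pow2_ge_0, site_sq_norm_nonneg.
Qed.

Lemma site_norm_triangle dl dp dr (S1 S2 : site) :
  site_norm dl dp dr (fun a x b => S1 a x b + S2 a x b) <=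
  site_norm dl dp dr S1 + site_norm dl dp dr S2.
Proof.
  exact (phi_Minkowski _
    (fun F => fsum dl (fun a => fsum dp (fun x => fsum dr (fun b => F (a, x, b)))))
    ltac:(intros; cbv beta; rewrite <- fsum_plus; apply fsum_ext; intros;
          rewrite <- fsum_plus; apply fsum_ext; intros; apply fsum_plus)
    ltac:(intros; cbv beta; rewrite <- fsum_scal; apply fsum_ext; intros;
          rewrite <- fsum_scal; apply fsum_ext; intros; apply fsum_scal)
    ltac:(intros; cbv beta; repeat (apply fsum_nonneg; intros); auto)
    (fun x => S1 (fst (fst x)) (snd (fst x)) (snd x))
    (fun x => S2 (fst (fst x)) (snd (fst x)) (snd x))).
Qed.

Lemma contr_vec_agree Db A p p' k :
  (forall i, (i < k)%nat -> p i = p' i) -> contr_vec Db A p k = contr_vec Db A p' k.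
Proof.
  induction k; simpl; intros H; auto.
  rewrite IHk, H by (intros; try apply H; lia). reflexivity.
Qed.

Lemma contr_vec_upd Db A p k i x :
  (k <= i)%nat -> contr_vec Db A (upd p i x) k = contr_vec Db A p k.
Proof. intros. apply contr_vec_agree. intros. apply upd_other. lia. Qed.

Lemma contr_vec_S_upd Db A p k x b :
  contr_vec Db A (upd p k x) (S k) b = fsum (Db k) (fun a => contr_vec Db A p k a * A k a x b).
Proof. simpl. rewrite contr_vec_upd, upd_same by lia. reflexivity. Qed.

Lemma contr_vec_sites Db A B p k :
  (forall i, (i < k)%nat -> A i = B i) -> contr_vec Db A p k = contr_vec Db B p k.
Proof.
  induction k; simpl; intros H; auto.
  rewrite IHk, H by (intros; try apply H; lia). reflexivity.
Qed.

Lemma contr_vec_scale Db (A : mps) s p k b :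
  contr_vec Db (fun j a x b => s * A j a x b) p k b = s ^ k * contr_vec Db A p k b.
Proof.
  revert b; induction k; intros b; simpl; [ring |].
  rewrite <- fsum_scal. apply fsum_ext. intros. rewrite IHk. ring.
Qed.

Fixpoint contr_from (Db : nat -> nat) (A : mps) (p : nat -> nat) (k m : nat) (v : nat -> R)
  : nat -> R :=
  match m with
  | O => v
  | S m' => fun b =>
      fsum (Db (k + m')%nat)
        (fun a => contr_from Db A p k m' v a * A (k + m')%nat a (p (k + m')%nat) b)
  end.

Lemma contr_vec_from Db A p k m :
  contr_vec Db A p (k + m) = contr_from Db A p k m (contr_vec Db A p k).
Proof.
  induction m.
  - rewrite Nat.add_0_r. reflexivity.
  - rewrite Nat.add_succ_r. simpl. rewrite IHm. reflexivity.
Qed.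

Lemma contr_from_agree Db A p p' k m v :
  (forall i, (k <= i < k + m)%nat -> p i = p' i) ->
  contr_from Db A p k m v = contr_from Db A p' k m v.
Proof.
  induction m; simpl; intros H; auto.
  rewrite IHm, H by (intros; try apply H; lia). reflexivity.
Qed.

Lemma contr_from_upd Db A p k m v i x :
  (i < k)%nat -> contr_from Db A (upd p i x) k m v = contr_from Db A p k m v.
Proof. intros. apply contr_from_agree. intros. apply upd_other. lia. Qed.

Lemma contr_from_sites Db A B p k m v :
  (forall i, (k <= i < k + m)%nat -> A i = B i) ->
  contr_from Db A p k m v = contr_from Db B p k m v.
Proof.
  induction m; simpl; intros H; auto.
  rewrite IHm, H by (intros; try apply H; lia). reflexivity.
Qed.

Definition unit_vec (c : nat) : nat -> R := fun b => if Nat.eqb b c then 1 else 0.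

Lemma contr_from_linear Db A p k m v b :
  (b < Db (k + m))%nat ->
  contr_from Db A p k m v b = fsum (Db k) (fun c => v c * contr_from Db A p k m (unit_vec c) b).
Proof.
  revert b; induction m; intros b Hb; simpl.
  - rewrite Nat.add_0_r in Hb. unfold unit_vec.
    rewrite <- (fsum_delta (Db k) b v) by auto.
    apply fsum_ext. intros. rewrite Nat.eqb_sym. ring.
  - rewrite (fsum_ext _ _ (fun a => fsum (Db k) (fun c =>
      v c * (contr_from Db A p k m (unit_vec c) a * A (k + m)%nat a (p (k + m)%nat) b)))).
    + rewrite fsum_swap. apply fsum_ext. intros. apply fsum_scal.
    + intros a Ha. rewrite IHm, <- fsum_scal_r by auto. apply fsum_ext. intros. ring.
Qed.

Definition orthonormal (k : nat) (d : nat -> nat) (N : nat) (W : (nat -> nat) -> nat -> R)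
  : Prop :=
  forall a a', (a < N)%nat -> (a' < N)%nat ->
    msum k d (fun p => W p a * W p a') = if Nat.eqb a a' then 1 else 0.

Lemma msum_orthonormal_quadratic k d N W (M : nat -> nat -> R) :
  orthonormal k d N W ->
  msum k d (fun p => fsum N (fun a => fsum N (fun a' => W p a * W p a' * M a a'))) =
  fsum N (fun a => M a a).
Proof.
  intros HW. rewrite msum_fsum. apply fsum_ext. intros a Ha.
  rewrite msum_fsum, <- (fsum_delta N a (M a)) by auto.
  apply fsum_ext. intros a' Ha'. rewrite msum_scal_r, HW; auto.
Qed.

Lemma left_env_orthonormal n d Db C :
  Db O = 1%nat -> left_canonical n d Db C ->
  forall k, (k < n)%nat -> orthonormal k d (Db k) (fun p => contr_vec Db C p k).
Proof.
  intros H0 HL k. induction k; intros Hk b b' Hb Hb'.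
  - rewrite H0 in Hb, Hb'. replace b with O by lia. replace b' with O by lia. simpl. ring.
  - change (msum (S k) d ?F) with (msum k d (sum_coord k d F)). unfold sum_coord.
    rewrite (msum_ext _ _ _ (fun p => fsum (Db k) (fun a => fsum (Db k) (fun a' =>
       contr_vec Db C p k a * contr_vec Db C p k a' * fsum (d k) (fun x => C k a x b * C k a' x b'))))).
    + rewrite msum_orthonormal_quadratic by (apply IHk; lia). apply HL; auto.
    + intros p. rewrite (fsum_ext _ _ (fun x => fsum (Db k) (fun a => fsum (Db k) (fun a' =>
         contr_vec Db C p k a * contr_vec Db C p k a' * (C k a x b * C k a' x b'))))).
      * rewrite fsum_swap. apply fsum_ext. intros. rewrite fsum_swap. apply fsum_ext. intros.
        apply fsum_scal.
      * intros. rewrite !contr_vec_S_upd, fsum_prod.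
        apply fsum_ext. intros. apply fsum_ext. intros. ring.
Qed.

Lemma msum_orthonormal_isometry k d Dl Dr (W : (nat -> nat) -> nat -> R) (A : site) :
  (forall p x, W (upd p k x) = W p) -> orthonormal k d Dl W ->
  msum (S k) d (fun p => fsum Dr (fun b => (fsum Dl (fun a => W p a * A a (p k) b)) ^ 2)) =
  site_sq_norm Dl (d k) Dr A.
Proof.
  intros Hupd HW. change (msum (S k) d ?F) with (msum k d (sum_coord k d F)). unfold sum_coord.
  rewrite (msum_ext _ _ _ (fun p => fsum Dl (fun a => fsum Dl (fun a' =>
       W p a * W p a' * fsum (d k) (fun x => fsum Dr (fun b => A a x b * A a' x b)))))).
  - rewrite msum_orthonormal_quadratic by auto. unfold site_sq_norm.
    apply fsum_ext. intros. apply fsum_ext. intros. apply fsum_ext. intros. ring.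
  - intros p. rewrite (fsum_ext _ _ (fun x => fsum Dr (fun b => fsum Dl (fun a => fsum Dl (fun a' =>
         W p a * W p a' * (A a x b * A a' x b)))))).
    + rewrite fsum_swap4. apply fsum_ext. intros. apply fsum_ext. intros.
      rewrite <- fsum_scal. apply fsum_ext. intros. apply fsum_scal.
    + intros x _. apply fsum_ext. intros b _. rewrite Hupd, upd_same, fsum_sq.
      apply fsum_ext. intros. apply fsum_ext. intros. ring.
Qed.

Lemma msum_contract_le k d Dl Dr (Y : (nat -> nat) -> nat -> R) (A : site) :
  (forall p x, Y (upd p k x) = Y p) ->
  msum (S k) d (fun p => fsum Dr (fun b => (fsum Dl (fun a => Y p a * A a (p k) b)) ^ 2)) <=
  msum k d (fun p => fsum Dl (fun a => Y p a ^ 2)) * site_sq_norm Dl (d k) Dr A.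
Proof.
  intros Hupd. change (msum (S k) d ?F) with (msum k d (sum_coord k d F)). unfold sum_coord.
  rewrite <- msum_scal_r. apply msum_le. intros p.
  eapply Rle_trans.
  - apply fsum_le. intros x _. apply fsum_le. intros b _.
    rewrite Hupd, upd_same. apply fsum_Cauchy_Schwarz.
  - unfold site_sq_norm. rewrite <- (fsum_swap3 (d k) Dr Dl (fun x b a => A a x b ^ 2)).
    rewrite <- fsum_scal. apply Req_le. apply fsum_ext. intros x _.
    rewrite <- fsum_scal. reflexivity.
Qed.

(** * Perturbing a left-canonical MPS *)

Section LeftCanonical.

Variables (n : nat) (d DC : nat -> nat) (C : mps).
Hypothesis bonds : bonds_ok n DC.
Hypothesis canonical : left_canonical n d DC C.

Lemma canonical_left_env_orthonormal k :
  (k < n)%nat -> orthonormal k d (DC k) (fun p => contr_vec DC C p k).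
Proof. intros. apply (left_env_orthonormal n); auto. apply bonds. Qed.

Lemma canonical_inner_site_sq_norm j :
  (S j < n)%nat -> site_sq_norm (DC j) (d j) (DC (S j)) (C j) = INR (DC (S j)).
Proof.
  intros Hj. unfold site_sq_norm. rewrite fsum_swap3, <- (Rmult_1_r (INR _)), <- fsum_const.
  apply fsum_ext. intros b Hb. pose proof (canonical j Hj b b Hb Hb) as Hbb.
  rewrite Nat.eqb_refl in Hbb. rewrite <- Hbb.
  apply fsum_ext. intros. apply fsum_ext. intros. ring.
Qed.

Lemma canonical_last_site_sq_norm j :
  S j = n -> site_sq_norm (DC j) (d j) (DC (S j)) (C j) = msum n d (fun p => contract n DC C p ^ 2).
Proof.
  intros Hj. rewrite <- msum_orthonormal_isometry with (W := fun p a => contr_vec DC C p j a).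
  - rewrite Hj. apply msum_ext. intros p. rewrite (proj2 bonds). simpl fsum.
    unfold contract. rewrite <- Hj. simpl contr_vec. ring.
  - intros. apply contr_vec_upd. lia.
  - apply canonical_left_env_orthonormal. lia.
Qed.

End LeftCanonical.

Section CanonicalPerturbation.

Variables (n : nat) (d DC : nat -> nat) (C delta : mps) (eps : R) (D : nat).
Hypothesis n_pos : (1 <= n)%nat.
Hypothesis bonds : bonds_ok n DC.
Hypothesis canonical : left_canonical n d DC C.
Hypothesis eps_range : 0 <= eps < 1.
Hypothesis delta_small : is_perturbation n d DC C eps delta.
Hypothesis bonds_le : forall j, (1 <= j)%nat -> (j <= n - 1)%nat -> (DC j <= D)%nat.

Definition Cp : mps := perturb C delta.

Definition env_err (j : nat) : R :=
  sqrt (msum j d (fun p =>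
    fsum (DC j) (fun a => (contr_vec DC Cp p j a - contr_vec DC C p j a) ^ 2))).

Lemma env_err_0 : env_err O = 0.
Proof.
  unfold env_err. simpl msum.
  rewrite (fsum_ext _ _ (fun _ => 0)), fsum_zero, sqrt_0 by (intros; simpl; ring). reflexivity.
Qed.

Lemma env_err_nonneg j : 0 <= env_err j.
Proof. apply sqrt_pos. Qed.

Lemma env_err_step j :
  (j < n)%nat -> env_err (S j) <= env_err j * site_norm_at d DC Cp j + site_norm_at d DC delta j.
Proof.
  intros Hj. unfold env_err.
  rewrite (msum_ext _ _ _ (fun p => fsum (DC (S j)) (fun b =>
     (fsum (DC j) (fun a => (contr_vec DC Cp p j a - contr_vec DC C p j a) * Cp j a (p j) b)
      + fsum (DC j) (fun a => contr_vec DC C p j a * delta j a (p j) b)) ^ 2))).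
  - eapply Rle_trans; [apply msum_fsum_Minkowski | apply Rplus_le_compat].
    + unfold site_norm_at. rewrite site_norm_eq_sqrt, <- sqrt_mult;
        [| apply msum_nonneg; intros; apply fsum_nonneg; intros; apply pow2_ge_0
         | apply site_sq_norm_nonneg].
      apply sqrt_le_1_alt, msum_contract_le.
      intros. rewrite !contr_vec_upd by lia. reflexivity.
    + rewrite msum_orthonormal_isometry; [apply Rle_refl | |].
      * intros. apply contr_vec_upd. lia.
      * apply (canonical_left_env_orthonormal n); auto.
  - intros p. apply fsum_ext. intros b _. f_equal. simpl.
    rewrite <- fsum_plus, <- fsum_minus. apply fsum_ext. intros. unfold Cp, perturb. ring.
Qed.

Definition norm_sum : R := fsum n (fun j => site_norm_at d DC C j).

(* With [||Cp_j|| <= 2 norm_sum] and [||delta_j|| <= norm_sum], the recursion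
   [env_err_step] gives [env_err j <= eps growth^(j+1)]. *)
Definition growth : R := 2 * norm_sum + 1.

Lemma norm_sum_nonneg : 0 <= norm_sum.
Proof. apply fsum_nonneg. intros. apply site_norm_at_nonneg. Qed.

Lemma growth_ge_1 : 1 <= growth.
Proof. unfold growth. pose proof norm_sum_nonneg. lra. Qed.

Lemma site_norm_le_norm_sum j : (j < n)%nat -> site_norm_at d DC C j <= norm_sum.
Proof.
  intros. apply (fsum_term_le n (fun j => site_norm_at d DC C j)); auto.
  intros. apply site_norm_at_nonneg.
Qed.

Lemma env_err_le j : (j <= n)%nat -> env_err j <= eps * growth ^ S j.
Proof.
  induction j as [| j IHj]; intros Hj.
  - rewrite env_err_0, pow_1. pose proof growth_ge_1. nra.
  - assert (Hjn : (j < n)%nat) by lia.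
    specialize (IHj ltac:(lia)).
    pose proof (site_norm_le_norm_sum j Hjn) as HC.
    pose proof (delta_small j Hjn) as Hd.
    pose proof (site_norm_at_nonneg d DC C j). pose proof (site_norm_at_nonneg d DC delta j).
    pose proof norm_sum_nonneg. pose proof (env_err_nonneg j).
    assert (HCp : site_norm_at d DC Cp j <= 2 * norm_sum).
    { assert (site_norm_at d DC Cp j <= site_norm_at d DC C j + site_norm_at d DC delta j)
        by apply site_norm_triangle.
      nra. }
    assert (Hq : norm_sum <= growth ^ S j).
    { apply Rle_trans with growth; [unfold growth; lra |].
      rewrite <- (pow_1 growth) at 1. apply Rle_pow; [apply growth_ge_1 | lia]. }
    assert (env_err j * site_norm_at d DC Cp j <= eps * growth ^ S j * (2 * norm_sum))
      by (apply Rmult_le_compat; auto; apply site_norm_at_nonneg).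
    pose proof (env_err_step j Hjn).
    replace (growth ^ S (S j)) with (growth ^ S j * (2 * norm_sum + 1))
      by (simpl; unfold growth; ring).
    nra.
Qed.

Definition hybrid (j : nat) : mps := fun k => if Nat.ltb k j then Cp k else C k.

Definition right_env (p : nat -> nat) (c j : nat) : R :=
  contr_from DC C p (S j) (n - S j) (unit_vec c) O.

Definition local_defect (p : nat -> nat) (c j : nat) : R :=
  fsum (DC j) (fun a => contr_vec DC Cp p j a * delta j a (p j) c).

Definition right_sq_norm (j : nat) : R :=
  psum (S j) (n - S j) d (fun p => fsum (DC (S j)) (fun c => right_env p c j ^ 2)) zero_index.

Definition step_err (j : nat) : R :=
  sqrt (msum n d (fun p => (contract n DC (hybrid (S j)) p - contract n DC (hybrid j) p) ^ 2)).

Lemma contract_split_at (A : mps) j p :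
  (j < n)%nat -> (forall i, (S j <= i)%nat -> A i = C i) ->
  contr_vec DC A p n O = fsum (DC (S j)) (fun c => contr_vec DC A p (S j) c * right_env p c j).
Proof.
  intros Hj HA.
  replace (contr_vec DC A p n) with (contr_vec DC A p (S j + (n - S j))) by (f_equal; lia).
  rewrite contr_vec_from, contr_from_linear.
  - apply fsum_ext. intros c _. unfold right_env.
    rewrite (contr_from_sites DC A C); auto. intros. apply HA. lia.
  - replace (S j + (n - S j))%nat with n by lia. rewrite (proj2 bonds). lia.
Qed.

Lemma hybrid_step j p :
  (j < n)%nat ->
  contract n DC (hybrid (S j)) p - contract n DC (hybrid j) p =
  fsum (DC (S j)) (fun c => local_defect p c j * right_env p c j).
Proof.
  intros Hj. unfold contract.
  rewrite (contract_split_at (hybrid (S j)) j p Hj), (contract_split_at (hybrid j) j p Hj).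
  - rewrite <- fsum_minus. apply fsum_ext. intros c _. rewrite <- Rmult_minus_distr_r. f_equal.
    simpl. rewrite (contr_vec_sites DC (hybrid (S j)) Cp), (contr_vec_sites DC (hybrid j) Cp).
    + unfold local_defect. rewrite <- fsum_minus. apply fsum_ext. intros a _. unfold hybrid.
      rewrite (proj2 (Nat.ltb_lt j (S j))), Nat.ltb_irrefl by lia. unfold Cp, perturb. ring.
    + intros. unfold hybrid. rewrite (proj2 (Nat.ltb_lt i j)) by lia. reflexivity.
    + intros. unfold hybrid. rewrite (proj2 (Nat.ltb_lt i (S j))) by lia. reflexivity.
  - intros. unfold hybrid. rewrite (proj2 (Nat.ltb_ge i j)) by lia. reflexivity.
  - intros. unfold hybrid. rewrite (proj2 (Nat.ltb_ge i (S j))) by lia. reflexivity.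
Qed.

Lemma step_err_le_defect j :
  (j < n)%nat ->
  step_err j <=
  sqrt (msum (S j) d (fun p => fsum (DC (S j)) (fun c => local_defect p c j ^ 2))) *
  sqrt (right_sq_norm j).
Proof.
  intros Hj. unfold step_err.
  rewrite (msum_ext _ _ _
    (fun p => (fsum (DC (S j)) (fun c => local_defect p c j * right_env p c j)) ^ 2))
    by (intros; rewrite hybrid_step; auto).
  rewrite <- sqrt_mult;
    [| apply msum_nonneg; intros; apply fsum_nonneg; intros; apply pow2_ge_0
     | apply psum_nonneg; intros; apply fsum_nonneg; intros; apply pow2_ge_0].
  apply sqrt_le_1_alt. eapply Rle_trans; [apply msum_le; intros p; apply fsum_Cauchy_Schwarz |].
  replace (msum n d) with (msum (S j + (n - S j)) d) by (f_equal; lia).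
  rewrite (msum_split (S j) (n - S j) d (fun p => fsum (DC (S j)) (fun c => local_defect p c j ^ 2))
     (fun p => fsum (DC (S j)) (fun c => right_env p c j ^ 2))); [apply Rle_refl | |].
  - intros q i x Hi. apply fsum_ext. intros c _. unfold local_defect. f_equal.
    apply fsum_ext. intros a _. rewrite contr_vec_upd, upd_other by lia. reflexivity.
  - intros q i x Hi. apply fsum_ext. intros c _. unfold right_env.
    rewrite contr_from_upd by lia. reflexivity.
Qed.

(* The defect splits as [delta_j] seen through the orthonormal environments of [C]
   plus [delta_j] seen through the environment error. *)
Lemma local_defect_le j :
  (j < n)%nat ->
  sqrt (msum (S j) d (fun p => fsum (DC (S j)) (fun c => local_defect p c j ^ 2))) <=
  (1 + env_err j) * site_norm_at d DC delta j.
Proof.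
  intros Hj.
  rewrite (msum_ext _ _ _ (fun p => fsum (DC (S j)) (fun c =>
     (fsum (DC j) (fun a => contr_vec DC C p j a * delta j a (p j) c)
      + fsum (DC j) (fun a => (contr_vec DC Cp p j a - contr_vec DC C p j a) * delta j a (p j) c)) ^ 2))).
  - eapply Rle_trans; [apply msum_fsum_Minkowski |]. cbv beta.
    rewrite (msum_orthonormal_isometry j d (DC j) (DC (S j)) (fun p a => contr_vec DC C p j a) (delta j));
      [| intros; apply contr_vec_upd; lia | apply (canonical_left_env_orthonormal n); auto].
    unfold site_norm_at. rewrite site_norm_eq_sqrt.
    enough (sqrt (msum (S j) d (fun p => fsum (DC (S j)) (fun b =>
       (fsum (DC j) (fun a => (contr_vec DC Cp p j a - contr_vec DC C p j a) * delta j a (p j) b)) ^ 2)))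
       <= env_err j * sqrt (site_sq_norm (DC j) (d j) (DC (S j)) (delta j))) by lra.
    unfold env_err. rewrite <- sqrt_mult;
      [| apply msum_nonneg; intros; apply fsum_nonneg; intros; apply pow2_ge_0
       | apply site_sq_norm_nonneg].
    apply sqrt_le_1_alt, msum_contract_le.
    intros. rewrite !contr_vec_upd by lia. reflexivity.
  - intros p. apply fsum_ext. intros c _. unfold local_defect. f_equal.
    rewrite <- fsum_plus. apply fsum_ext. intros. ring.
Qed.

Lemma right_sq_norm_last j : S j = n -> right_sq_norm j = 1.
Proof.
  intros Hj. unfold right_sq_norm, right_env. replace (n - S j)%nat with O by lia.
  simpl psum. simpl contr_from. rewrite Hj, (proj2 bonds). simpl. unfold unit_vec. simpl. ring.
Qed.

Lemma right_sq_norm_inner j :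
  (S j < n)%nat -> right_sq_norm j = msum n d (fun p => contract n DC C p ^ 2).
Proof.
  intros Hj. symmetry.
  rewrite (msum_ext _ _ _ (fun p => fsum (DC (S j)) (fun c => fsum (DC (S j)) (fun c' =>
     (contr_vec DC C p (S j) c * contr_vec DC C p (S j) c') * (right_env p c j * right_env p c' j))))).
  - replace (msum n d) with (msum (S j + (n - S j)) d) by (f_equal; lia).
    rewrite msum_fsum. unfold right_sq_norm. rewrite psum_fsum. apply fsum_ext. intros c Hc.
    rewrite msum_fsum.
    rewrite (fsum_ext _ _ (fun c' => (if Nat.eqb c c' then 1 else 0) *
      psum (S j) (n - S j) d (fun p => right_env p c j * right_env p c' j) zero_index)).
    + rewrite fsum_delta by auto. f_equal. extensionality q. ring.
    + intros c' Hc'.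
      rewrite (msum_split (S j) (n - S j) d
        (fun p => contr_vec DC C p (S j) c * contr_vec DC C p (S j) c')
        (fun p => right_env p c j * right_env p c' j)).
      * rewrite (canonical_left_env_orthonormal n d DC C); auto.
      * intros. rewrite !contr_vec_upd by lia. reflexivity.
      * intros. unfold right_env. rewrite !contr_from_upd by lia. reflexivity.
  - intros p. unfold contract. rewrite (contract_split_at C j p) by (auto; lia).
    rewrite fsum_sq. apply fsum_ext. intros. apply fsum_ext. intros. ring.
Qed.

Lemma step_err_le j :
  (j < n)%nat ->
  step_err j <= (1 + eps * growth ^ n) * site_norm_at d DC delta j * sqrt (right_sq_norm j).
Proof.
  intros Hj.
  assert (He : env_err j <= eps * growth ^ n).
  { eapply Rle_trans; [apply env_err_le; lia |].
    apply Rmult_le_compat_l; [lra |]. apply Rle_pow; [apply growth_ge_1 | lia]. }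
  eapply Rle_trans; [apply step_err_le_defect; auto |].
  apply Rmult_le_compat_r; [apply sqrt_pos |].
  eapply Rle_trans; [apply local_defect_le; auto |].
  apply Rmult_le_compat_r; [apply site_norm_at_nonneg | lra].
Qed.

Lemma step_err_inner_le j :
  (S j < n)%nat -> step_err j <= eps * (1 + eps * growth ^ n) * contr_norm n d DC C * sqrt (INR D).
Proof.
  intros Hj. eapply Rle_trans; [apply step_err_le; lia |].
  rewrite right_sq_norm_inner by auto.
  assert (HCj : site_norm_at d DC C j <= sqrt (INR D)).
  { unfold site_norm_at. rewrite site_norm_eq_sqrt, (canonical_inner_site_sq_norm n) by auto.
    apply sqrt_le_1_alt, le_INR, bonds_le; lia. }
  pose proof (delta_small j ltac:(lia)).
  assert (Hd : site_norm_at d DC delta j <= eps * sqrt (INR D)).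
  { pose proof (site_norm_at_nonneg d DC C j). nra. }
  pose proof (pow_le growth n ltac:(pose proof growth_ge_1; lra)).
  unfold contr_norm.
  replace (eps * (1 + eps * growth ^ n) * sqrt (msum n d (fun p => contract n DC C p ^ 2)) * sqrt (INR D))
    with ((1 + eps * growth ^ n) * (eps * sqrt (INR D)) * sqrt (msum n d (fun p => contract n DC C p ^ 2)))
    by ring.
  apply Rmult_le_compat_r; [apply sqrt_pos |]. apply Rmult_le_compat_l; nra.
Qed.

Lemma step_err_last_le : step_err (n - 1) <= eps * (1 + eps * growth ^ n) * contr_norm n d DC C.
Proof.
  eapply Rle_trans; [apply step_err_le; lia |].
  rewrite right_sq_norm_last, sqrt_1 by lia.
  pose proof (delta_small (n - 1)%nat ltac:(lia)) as Hd.
  unfold site_norm_at at 2 in Hd.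
  rewrite site_norm_eq_sqrt, (canonical_last_site_sq_norm n) in Hd by (auto; lia).
  pose proof (pow_le growth n ltac:(pose proof growth_ge_1; lra)).
  assert (0 <= eps * growth ^ n) by (apply Rmult_le_pos; lra).
  unfold contr_norm. rewrite Rmult_1_r.
  replace (eps * (1 + eps * growth ^ n) * sqrt (msum n d (fun p => contract n DC C p ^ 2)))
    with ((1 + eps * growth ^ n) * (eps * sqrt (msum n d (fun p => contract n DC C p ^ 2))))
    by ring.
  apply Rmult_le_compat_l; lra.
Qed.

Lemma contr_dist_perturb_le :
  contr_dist n d DC Cp DC C <=
  eps * (1 + eps * growth ^ n) * contr_norm n d DC C * (1 + INR (n - 1) * sqrt (INR D)).
Proof.
  unfold contr_dist.
  rewrite (msum_ext _ _ _ (fun p =>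
    (fsum n (fun j => contract n DC (hybrid (S j)) p - contract n DC (hybrid j) p)) ^ 2)).
  2:{ intros p. rewrite (fsum_telescope n (fun j => contract n DC (hybrid j) p)). unfold contract.
      assert (Hn : contr_vec DC (hybrid n) p n = contr_vec DC Cp p n).
      { apply contr_vec_sites. intros i Hi. unfold hybrid.
        rewrite (proj2 (Nat.ltb_lt i n)) by lia. reflexivity. }
      assert (H0 : contr_vec DC (hybrid O) p n = contr_vec DC C p n)
        by (apply contr_vec_sites; reflexivity).
      rewrite Hn, H0. reflexivity. }
  eapply Rle_trans; [apply msum_Minkowski_sum |]. fold step_err.
  rewrite fsum_last by auto.
  eapply Rle_trans.
  { apply Rplus_le_compat; [apply fsum_le; intros j Hj; apply step_err_inner_le; lia
                          | apply step_err_last_le]. }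
  rewrite fsum_const. apply Req_le. ring.
Qed.

End CanonicalPerturbation.

Lemma rel_err_canonical_le n d DC C delta eps D :
  (1 <= n)%nat -> bonds_ok n DC -> left_canonical n d DC C ->
  0 <= eps < 1 -> is_perturbation n d DC C eps delta ->
  (forall j, (1 <= j)%nat -> (j <= n - 1)%nat -> (DC j <= D)%nat) ->
  rel_err n d DC C delta <=
  eps * (1 + eps * growth n d DC C ^ n) * (1 + INR (n - 1) * sqrt (INR D)).
Proof.
  intros Hn Hb HL He Hd HD.
  pose proof (contr_dist_perturb_le n d DC C delta eps D Hn Hb HL He Hd HD) as Hdist.
  pose proof (pow_le (growth n d DC C) n ltac:(pose proof (growth_ge_1 n d DC C); lra)).
  assert (0 <= INR (n - 1) * sqrt (INR D)) by (apply Rmult_le_pos; [apply pos_INR | apply sqrt_pos]).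
  assert (Hf : 0 <= eps * (1 + eps * growth n d DC C ^ n) * (1 + INR (n - 1) * sqrt (INR D))).
  { apply Rmult_le_pos; [apply Rmult_le_pos |]; nra. }
  unfold rel_err. fold (Cp C delta).
  destruct (Req_dec (contr_norm n d DC C) 0) as [Z0 | Z0].
  - (* the junk value [x / 0 = 0] makes the bound trivial *)
    rewrite Z0. unfold Rdiv. rewrite Rinv_0, Rmult_0_r. exact Hf.
  - pose proof (sqrt_pos (msum n d (fun p => contract n DC C p ^ 2))). fold (contr_norm n d DC C) in *.
    unfold Rdiv. apply (Rmult_le_reg_r (contr_norm n d DC C)); [lra |].
    rewrite Rmult_assoc, Rinv_l by auto. lra.
Qed.

(** * The error factor *)

Lemma Bernoulli_ineq n e : 0 <= e -> 1 + INR n * e <= (1 + e) ^ n.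
Proof.
  intros He. induction n; [simpl; lra |]. rewrite S_INR. simpl pow.
  pose proof (pos_INR n). nra.
Qed.

Lemma contr_sq_norm_pos n d Db T :
  nonzero_contraction n d Db T -> 0 < msum n d (fun p => contract n Db T p ^ 2).
Proof.
  intros [p [Hp Hc]].
  set (p' := fun j => if Nat.ltb j n then p j else O).
  assert (E : contract n Db T p' = contract n Db T p).
  { unfold contract. rewrite (contr_vec_agree Db T p' p); auto.
    intros. unfold p'. rewrite (proj2 (Nat.ltb_lt i n)); auto. }
  eapply Rlt_le_trans; [| apply (msum_ge n d _ p')].
  - cbv beta. rewrite E, <- Rsqr_pow2. apply Rsqr_pos_lt. exact Hc.
  - intros. apply pow2_ge_0.
  - split; intros j Hj; unfold p'.
    + rewrite (proj2 (Nat.ltb_lt j n)); auto.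
    + rewrite (proj2 (Nat.ltb_ge j n)); auto.
Qed.

Lemma rel_err_uniform n d Db A delta lam :
  nonzero_contraction n d Db A -> 1 <= lam ->
  (forall p, valid n d p -> contract n Db (perturb A delta) p = lam * contract n Db A p) ->
  rel_err n d Db A delta = lam - 1.
Proof.
  intros Hnz Hlam Hp. unfold rel_err, contr_dist, contr_norm.
  pose proof (contr_sq_norm_pos n d Db A Hnz).
  rewrite (msum_ext_valid _ _ _ (fun p => (lam - 1) ^ 2 * contract n Db A p ^ 2))
    by (intros p Hv; rewrite Hp by auto; ring).
  rewrite msum_scal, sqrt_mult, sqrt_pow2 by (try apply pow2_ge_0; lra).
  field. apply Rgt_not_eq, sqrt_lt_R0. auto.
Qed.

Lemma scale_is_perturbation n d Db (T : mps) eps :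
  0 <= eps -> is_perturbation n d Db T eps (fun j a x b => eps * T j a x b).
Proof. intros He j Hj. unfold site_norm_at. rewrite site_norm_scal by auto. lra. Qed.

Lemma rel_err_scale n d Db (T : mps) eps :
  nonzero_contraction n d Db T -> 0 <= eps ->
  rel_err n d Db T (fun j a x b => eps * T j a x b) = (1 + eps) ^ n - 1.
Proof.
  intros Hnz He. apply rel_err_uniform; auto.
  - apply pow_R1_Rle. lra.
  - intros p _. unfold contract.
    rewrite <- contr_vec_scale. f_equal. unfold perturb.
    extensionality j. extensionality a. extensionality x. extensionality b. ring.
Qed.

Lemma scale_in_err_set n d Db T eps :
  nonzero_contraction n d Db T -> 0 <= eps -> err_set n d Db T eps ((1 + eps) ^ n - 1).
Proof.
  intros Hnz He. exists (fun j a x b => eps * T j a x b). split.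
  - apply scale_is_perturbation. auto.
  - symmetry. apply rel_err_scale; auto.
Qed.

Lemma sup_err_ge_scale n d Db T eps s :
  nonzero_contraction n d Db T -> 0 <= eps ->
  is_lub (err_set n d Db T eps) s -> (1 + eps) ^ n - 1 <= s.
Proof. intros Hnz He [Hub _]. apply Hub, scale_in_err_set; auto. Qed.

Lemma sup_err_canonical_le n d DC C eps D s :
  (1 <= n)%nat -> bonds_ok n DC -> left_canonical n d DC C -> 0 <= eps < 1 ->
  (forall j, (1 <= j)%nat -> (j <= n - 1)%nat -> (DC j <= D)%nat) ->
  is_lub (err_set n d DC C eps) s ->
  s <= eps * (1 + eps * growth n d DC C ^ n) * (1 + INR (n - 1) * sqrt (INR D)).
Proof.
  intros Hn Hb HL He HD [_ Hleast]. apply Hleast.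
  intros r [delta [Hd ->]]. apply rel_err_canonical_le; auto.
Qed.

Lemma canonical_error_bound n d DT T DC C D :
  (1 <= n)%nat -> bonds_ok n DC -> nonzero_contraction n d DT T ->
  left_canonical n d DC C ->
  (forall j, (1 <= j)%nat -> (j <= n - 1)%nat -> (DC j <= D)%nat) ->
  sup_bound_up_to_O_eps2 n d DC C DT T (factor n D).
Proof.
  intros Hn HbC Hnz HL HD.
  set (F := 1 + INR (n - 1) * sqrt (INR D)).
  set (G := growth n d DC C ^ n).
  assert (HF : 0 <= F)
    by (unfold F; pose proof (pos_INR (n - 1)); pose proof (sqrt_pos (INR D)); nra).
  assert (HG : 0 <= G) by (apply pow_le; pose proof (growth_ge_1 n d DC C); lra).
  exists (F * G), 1. split; [lra |]. intros eps He sC sT HsC HsT.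
  pose proof (sup_err_canonical_le n d DC C eps D sC Hn HbC HL ltac:(lra) HD HsC) as HC.
  pose proof (sup_err_ge_scale n d DT T eps sT Hnz ltac:(lra) HsT).
  pose proof (Bernoulli_ineq n eps ltac:(lra)).
  change (sC <= eps * (1 + eps * G) * F) in HC.
  assert (HnR : 0 < INR n) by (apply lt_0_INR; lia).
  assert (Hfn : factor n D * INR n = F) by (unfold factor, F; field; lra).
  assert (0 <= factor n D) by (apply (Rmult_le_reg_r (INR n)); lra).
  assert (factor n D * (INR n * eps) <= factor n D * sT) by (apply Rmult_le_compat_l; lra).
  replace (factor n D * (INR n * eps)) with (F * eps) in * by (rewrite <- Hfn; ring).
  replace (eps * (1 + eps * G) * F) with (F * eps + F * G * eps ^ 2) in HC by ring.
  lra.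
Qed.

(** * Sharpness *)

Definition corner_site : site :=
  fun a x b => if andb (andb (Nat.eqb a 0) (Nat.eqb x 0)) (Nat.eqb b 0) then 1 else 0.

Lemma site_sq_norm_corner N1 N2 N3 :
  (1 <= N1)%nat -> (1 <= N2)%nat -> (1 <= N3)%nat -> site_sq_norm N1 N2 N3 corner_site = 1.
Proof.
  intros. unfold site_sq_norm, corner_site.
  rewrite (fsum_ext _ _ (fun a => (if Nat.eqb a 0 then 1 else 0) *
     fsum N2 (fun x => (if Nat.eqb x 0 then 1 else 0) *
       fsum N3 (fun b => (if Nat.eqb b 0 then 1 else 0) * 1)))).
  - rewrite !fsum_delta_sym by lia. reflexivity.
  - intros a _. rewrite <- fsum_scal. apply fsum_ext. intros x _.
    rewrite <- !fsum_scal. apply fsum_ext. intros b _.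
    destruct (Nat.eqb a 0), (Nat.eqb x 0), (Nat.eqb b 0); simpl; ring.
Qed.

Lemma lub_exists_of_canonical n d DC C eps D r :
  (1 <= n)%nat -> bonds_ok n DC -> left_canonical n d DC C -> 0 <= eps < 1 ->
  (forall j, (1 <= j)%nat -> (j <= n - 1)%nat -> (DC j <= D)%nat) ->
  err_set n d DC C eps r -> exists s, is_lub (err_set n d DC C eps) s.
Proof.
  intros Hn Hb HL He HD Hr.
  destruct (completeness (err_set n d DC C eps)) as [s Hs]; [| exists r; exact Hr | exists s; exact Hs].
  exists (eps * (1 + eps * growth n d DC C ^ n) * (1 + INR (n - 1) * sqrt (INR D))).
  intros r' [delta [Hd ->]]. apply rel_err_canonical_le; auto.
Qed.

Section SharpExample.

Variables (n D : nat).
Hypothesis n_pos : (1 <= n)%nat.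
Hypothesis D_pos : (1 <= D)%nat.

(* Only the first physical leg is nontrivial.  [ex_C] copies it into the bond and
   carries it to the last site, which projects onto the value 0. *)
Definition ex_phys (j : nat) : nat := if Nat.eqb j 0 then D else 1%nat.
Definition ex_DT (j : nat) : nat := 1%nat.
Definition ex_T : mps := fun j a x b => if Nat.eqb x 0 then 1 else 0.
Definition ex_DC (j : nat) : nat := if orb (Nat.eqb j 0) (Nat.leb n j) then 1%nat else D.
Definition ex_C : mps := fun j a x b =>
  if Nat.eqb j (n - 1) then (if andb (Nat.eqb a 0) (Nat.eqb x 0) then 1 else 0)
  else if Nat.eqb j 0 then (if Nat.eqb x b then 1 else 0)
  else (if Nat.eqb a b then 1 else 0).
Definition ex_pert (eps : R) : mps := fun j a x b =>
  if Nat.eqb j (n - 1) then eps * ex_C j a x b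
  else eps * sqrt (INR D) * corner_site a x b.

Lemma ex_DC_0 : ex_DC 0 = 1%nat.
Proof. reflexivity. Qed.

Lemma ex_DC_inner k : (k <> 0)%nat -> (k < n)%nat -> ex_DC k = D.
Proof.
  intros. unfold ex_DC.
  rewrite (proj2 (Nat.eqb_neq k 0)), (proj2 (Nat.leb_gt n k)) by auto. reflexivity.
Qed.

Lemma ex_DC_ge_1 k : (1 <= ex_DC k)%nat.
Proof. unfold ex_DC. destruct (orb _ _); lia. Qed.

Lemma ex_phys_ge_1 k : (1 <= ex_phys k)%nat.
Proof. unfold ex_phys. destruct (Nat.eqb k 0); lia. Qed.

Lemma ex_T_bonds : bonds_ok n ex_DT.
Proof. split; reflexivity. Qed.

Lemma ex_C_bonds : bonds_ok n ex_DC.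
Proof.
  split; [reflexivity |]. unfold ex_DC. rewrite Nat.leb_refl. destruct (Nat.eqb n 0); reflexivity.
Qed.

Lemma ex_T_canonical : left_canonical n ex_phys ex_DT ex_T.
Proof.
  intros j Hj b b' Hb Hb'. unfold ex_DT in *. replace b with O by lia. replace b' with O by lia.
  simpl Nat.eqb. rewrite fsum_1. unfold ex_T.
  rewrite (fsum_ext _ _ (fun x => (if Nat.eqb x 0 then 1 else 0) * 1)).
  - apply fsum_delta_sym. pose proof (ex_phys_ge_1 j). lia.
  - intros x _. destruct (Nat.eqb x 0); ring.
Qed.

Lemma ex_C_canonical : left_canonical n ex_phys ex_DC ex_C.
Proof.
  intros j Hj b b' Hb Hb'. unfold ex_C.
  rewrite (proj2 (Nat.eqb_neq j (n - 1))) by lia.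
  rewrite ex_DC_inner in Hb, Hb' by lia.
  destruct (Nat.eqb_spec j 0) as [-> | Hj0].
  - rewrite ex_DC_0, fsum_1. unfold ex_phys. simpl Nat.eqb. cbv iota.
    rewrite fsum_delta_sym by auto.
    destruct (Nat.eqb_spec b b'), (Nat.eqb_spec b' b); auto; lia.
  - rewrite ex_DC_inner by lia. unfold ex_phys. rewrite (proj2 (Nat.eqb_neq j 0)) by auto.
    rewrite (fsum_ext _ _ (fun a => (if Nat.eqb a b then 1 else 0) * (if Nat.eqb a b' then 1 else 0)))
      by (intros; apply fsum_1).
    rewrite fsum_delta_sym by auto.
    destruct (Nat.eqb_spec b b'), (Nat.eqb_spec b' b); auto; lia.
Qed.

Definition ex_index_ok (p : nat -> nat) : Prop := forall j, (j < n)%nat -> (p j < ex_phys j)%nat.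

Lemma ex_index_0 p : ex_index_ok p -> (p O < D)%nat.
Proof. intros H. exact (H O n_pos). Qed.

Lemma ex_index_inner p j : ex_index_ok p -> (j <> 0)%nat -> (j < n)%nat -> p j = O.
Proof.
  intros H Hj Hjn. specialize (H j Hjn). unfold ex_phys in H.
  rewrite (proj2 (Nat.eqb_neq j 0)) in H by auto. lia.
Qed.

Lemma ex_T_contr_vec p k b :
  ex_index_ok p -> (1 <= k <= n)%nat ->
  contr_vec ex_DT ex_T p k b = if Nat.eqb (p O) 0 then 1 else 0.
Proof.
  intros Hp. revert b. induction k; intros b Hk; [lia |].
  simpl contr_vec. unfold ex_DT, ex_T. destruct k.
  - simpl. destruct (Nat.eqb (p O) 0); ring.
  - rewrite IHk, (ex_index_inner p (S k)) by (auto; lia). simpl. ring.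
Qed.

Lemma ex_T_contract p : ex_index_ok p -> contract n ex_DT ex_T p = if Nat.eqb (p O) 0 then 1 else 0.
Proof. intros. apply ex_T_contr_vec; [auto | lia]. Qed.

Lemma ex_T_nonzero : nonzero_contraction n ex_phys ex_DT ex_T.
Proof.
  assert (Hz : ex_index_ok zero_index)
    by (intros j _; pose proof (ex_phys_ge_1 j); unfold zero_index; lia).
  exists zero_index. split; [exact Hz |].
  rewrite ex_T_contract by exact Hz. simpl. lra.
Qed.

Definition ex_perturbed (eps : R) : mps := perturb ex_C (ex_pert eps).

Lemma ex_perturbed_contr_vec eps p k b :
  ex_index_ok p -> (1 <= k)%nat -> (k <= n - 1)%nat ->
  contr_vec ex_DC (ex_perturbed eps) p k b =
  if Nat.eqb (p O) b then (if Nat.eqb (p O) 0 then (1 + eps * sqrt (INR D)) ^ k else 1) else 0.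
Proof.
  intros Hp. revert b. induction k; intros b Hk1 Hk2; [lia |].
  pose proof (ex_index_0 p Hp).
  simpl contr_vec. destruct k.
  - rewrite ex_DC_0. simpl fsum. unfold ex_perturbed, perturb, ex_pert, ex_C, corner_site.
    rewrite (proj2 (Nat.eqb_neq 0 (n - 1))) by lia. simpl Nat.eqb. cbv iota.
    destruct (Nat.eqb_spec (p O) b), (Nat.eqb_spec (p O) 0), (Nat.eqb_spec b 0); simpl; try ring; lia.
  - rewrite ex_DC_inner, (ex_index_inner p (S k)) by (auto; lia).
    set (g := if Nat.eqb (p O) 0 then (1 + eps * sqrt (INR D)) ^ S k else 1).
    rewrite (fsum_ext _ _ (fun a => (if Nat.eqb (p O) a then 1 else 0) *
        (g * ((if Nat.eqb a b then 1 else 0) +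
              eps * sqrt (INR D) * (if andb (andb (Nat.eqb a 0) true) (Nat.eqb b 0) then 1 else 0))))).
    + rewrite fsum_delta by auto. unfold g.
      destruct (Nat.eqb_spec (p O) b), (Nat.eqb_spec (p O) 0), (Nat.eqb_spec b 0); simpl; try ring; lia.
    + intros a Ha. rewrite IHk by lia. fold g.
      unfold ex_perturbed, perturb, ex_pert, ex_C, corner_site.
      rewrite (proj2 (Nat.eqb_neq (S k) (n - 1))), (proj2 (Nat.eqb_neq (S k) 0)) by lia.
      simpl (Nat.eqb 0 0). destruct (Nat.eqb (p O) a); ring.
Qed.

Lemma ex_perturbed_contract eps p :
  ex_index_ok p ->
  contract n ex_DC (ex_perturbed eps) p =
  (1 + eps) * (1 + eps * sqrt (INR D)) ^ (n - 1) * (if Nat.eqb (p O) 0 then 1 else 0).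
Proof.
  intros Hp. pose proof (ex_index_0 p Hp). unfold contract.
  replace (contr_vec ex_DC (ex_perturbed eps) p n)
    with (contr_vec ex_DC (ex_perturbed eps) p (S (n - 1))) by (f_equal; lia).
  simpl contr_vec. destruct (Nat.eq_dec n 1) as [E | E].
  - replace (n - 1)%nat with O by lia. rewrite ex_DC_0. simpl fsum.
    unfold ex_perturbed, perturb, ex_pert, ex_C. rewrite E. simpl.
    destruct (Nat.eqb (p O) 0); ring.
  - rewrite ex_DC_inner, (ex_index_inner p (n - 1)) by (auto; lia).
    set (g := if Nat.eqb (p O) 0 then (1 + eps * sqrt (INR D)) ^ (n - 1) else 1).
    rewrite (fsum_ext _ _ (fun a => (if Nat.eqb (p O) a then 1 else 0) *
        (g * ((1 + eps) * (if Nat.eqb a 0 then 1 else 0))))).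
    + rewrite fsum_delta by auto. unfold g. destruct (Nat.eqb_spec (p O) 0); ring.
    + intros a Ha. rewrite ex_perturbed_contr_vec by (auto; lia). fold g.
      unfold ex_perturbed, perturb, ex_pert, ex_C. rewrite Nat.eqb_refl. simpl (Nat.eqb 0 0).
      destruct (Nat.eqb (p O) a), (Nat.eqb a 0); simpl; ring.
Qed.

Lemma ex_C_contract p : ex_index_ok p -> contract n ex_DC ex_C p = if Nat.eqb (p O) 0 then 1 else 0.
Proof.
  intros Hp.
  replace ex_C with (ex_perturbed 0).
  - rewrite ex_perturbed_contract by auto. rewrite Rmult_0_l, Rplus_0_r, pow1. ring.
  - extensionality j. extensionality a. extensionality x. extensionality b.
    unfold ex_perturbed, perturb, ex_pert. destruct (Nat.eqb j (n - 1)); ring.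
Qed.

Lemma ex_same_contraction : same_contraction n ex_phys ex_DC ex_C ex_DT ex_T.
Proof. intros p Hp. rewrite ex_C_contract, ex_T_contract; auto. Qed.

Lemma ex_C_nonzero : nonzero_contraction n ex_phys ex_DC ex_C.
Proof.
  destruct ex_T_nonzero as [p [Hp Hc]].
  exists p. split; auto. rewrite ex_same_contraction; auto.
Qed.

Lemma ex_pert_is_perturbation eps :
  0 <= eps -> is_perturbation n ex_phys ex_DC ex_C eps (ex_pert eps).
Proof.
  intros He j Hj. unfold site_norm_at, ex_pert.
  destruct (Nat.eqb_spec j (n - 1)) as [E | E].
  - rewrite site_norm_scal by auto. lra.
  - rewrite site_norm_scal by (apply Rmult_le_pos; [lra | apply sqrt_pos]).
    rewrite !site_norm_eq_sqrt, site_sq_norm_corner by (apply ex_DC_ge_1 || apply ex_phys_ge_1).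
    rewrite (canonical_inner_site_sq_norm n ex_phys ex_DC ex_C ex_C_canonical j), ex_DC_inner
      by lia.
    rewrite sqrt_1. lra.
Qed.

Lemma ex_rel_err eps :
  0 <= eps ->
  rel_err n ex_phys ex_DC ex_C (ex_pert eps) = (1 + eps) * (1 + eps * sqrt (INR D)) ^ (n - 1) - 1.
Proof.
  intros He. apply rel_err_uniform; [apply ex_C_nonzero | |].
  - assert (0 <= eps * sqrt (INR D)) by (apply Rmult_le_pos; [lra | apply sqrt_pos]).
    assert (1 <= (1 + eps * sqrt (INR D)) ^ (n - 1)) by (apply pow_R1_Rle; lra).
    nra.
  - intros p [Hp _]. fold (ex_perturbed eps).
    rewrite ex_perturbed_contract, ex_C_contract by auto. ring.
Qed.

Lemma ex_sup_err_ge eps s :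
  0 <= eps -> is_lub (err_set n ex_phys ex_DC ex_C eps) s ->
  eps * (1 + INR (n - 1) * sqrt (INR D)) <= s.
Proof.
  intros He [Hub _].
  assert (Hin : err_set n ex_phys ex_DC ex_C eps
                  ((1 + eps) * (1 + eps * sqrt (INR D)) ^ (n - 1) - 1)).
  { exists (ex_pert eps).
    split; [apply ex_pert_is_perturbation; auto | symmetry; apply ex_rel_err; auto]. }
  apply Hub in Hin.
  assert (0 <= eps * sqrt (INR D)) by (apply Rmult_le_pos; [lra | apply sqrt_pos]).
  pose proof (Bernoulli_ineq (n - 1) (eps * sqrt (INR D)) ltac:(auto)).
  pose proof (pos_INR (n - 1)).
  set (X := (1 + eps * sqrt (INR D)) ^ (n - 1)) in *.
  assert (1 <= X) by nra.
  nra.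
Qed.

Lemma ex_T_sup_err_le eps s :
  0 <= eps < 1 -> is_lub (err_set n ex_phys ex_DT ex_T eps) s ->
  s <= eps * (1 + eps * growth n ex_phys ex_DT ex_T ^ n) * INR n.
Proof.
  intros He Hs.
  replace (INR n) with (1 + INR (n - 1) * sqrt (INR 1))
    by (rewrite minus_INR by lia; simpl INR; rewrite sqrt_1; ring).
  apply (sup_err_canonical_le n ex_phys ex_DT ex_T eps 1 s n_pos ex_T_bonds ex_T_canonical He); auto.
Qed.

Lemma ex_T_lub_exists eps : 0 <= eps < 1 -> exists s, is_lub (err_set n ex_phys ex_DT ex_T eps) s.
Proof.
  intros He.
  apply (lub_exists_of_canonical n ex_phys ex_DT ex_T eps 1 ((1 + eps) ^ n - 1) n_pos
           ex_T_bonds ex_T_canonical He).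
  - intros. unfold ex_DT. lia.
  - apply scale_in_err_set; [apply ex_T_nonzero | lra].
Qed.

Lemma ex_C_lub_exists eps : 0 <= eps < 1 -> exists s, is_lub (err_set n ex_phys ex_DC ex_C eps) s.
Proof.
  intros He.
  apply (lub_exists_of_canonical n ex_phys ex_DC ex_C eps D
           ((1 + eps) * (1 + eps * sqrt (INR D)) ^ (n - 1) - 1) n_pos ex_C_bonds ex_C_canonical He).
  - intros. rewrite ex_DC_inner by lia. lia.
  - exists (ex_pert eps). split; [apply ex_pert_is_perturbation; lra |].
    symmetry. apply ex_rel_err. lra.
Qed.

End SharpExample.

Lemma exists_small_eps a B e0 :
  0 < a -> 0 < e0 -> exists eps, 0 < eps < e0 /\ eps * B < a.
Proof.
  intros Ha He0. pose proof (Rabs_pos B).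
  set (eps := Rmin (e0 / 2) (a / (2 * (Rabs B + 1)))).
  assert (H1 : eps <= e0 / 2) by apply Rmin_l.
  assert (H2 : eps <= a / (2 * (Rabs B + 1))) by apply Rmin_r.
  assert (H3 : 0 < eps) by (apply Rmin_glb_lt; [lra | apply Rdiv_lt_0_compat; lra]).
  exists eps. split; [lra |].
  assert (eps * (2 * (Rabs B + 1)) <= a).
  { apply Rle_trans with (a / (2 * (Rabs B + 1)) * (2 * (Rabs B + 1))).
    - apply Rmult_le_compat_r; lra.
    - right. field. lra. }
  pose proof (Rle_abs B). nra.
Qed.

Lemma canonical_error_bound_sharp n D :
  (1 <= n)%nat -> (1 <= D)%nat -> forall c, c < factor n D ->
  ~ sup_bound_up_to_O_eps2 n (ex_phys D) (ex_DC n D) (ex_C n) ex_DT ex_T c.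
Proof.
  intros Hn HD c Hc [K [e0 [He0 Hs]]].
  set (F := 1 + INR (n - 1) * sqrt (INR D)).
  set (cp := Rmax c 0).
  set (GT := growth n (ex_phys D) ex_DT ex_T ^ n).
  assert (HnR : 0 < INR n) by (apply lt_0_INR; lia).
  assert (Hfn : factor n D * INR n = F) by (unfold factor, F; field; lra).
  assert (Hcp : c <= cp /\ 0 <= cp /\ cp < factor n D).
  { split; [apply Rmax_l | split; [apply Rmax_r |]].
    apply Rmax_lub_lt; auto. apply (Rmult_lt_reg_r (INR n)); auto. rewrite Hfn, Rmult_0_l.
    pose proof (pos_INR (n - 1)). pose proof (sqrt_pos (INR D)). unfold F. nra. }
  assert (HGT : 0 <= GT) by (apply pow_le; pose proof (growth_ge_1 n (ex_phys D) ex_DT ex_T); lra).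
  destruct (exists_small_eps (INR n * (factor n D - cp)) (cp * INR n * GT + Rabs K) (Rmin e0 (1 / 2)))
    as [eps [[He Hemin] Hsmall]];
    [apply Rmult_lt_0_compat; lra | apply Rmin_glb_lt; lra |].
  pose proof (Rmin_l e0 (1 / 2)). pose proof (Rmin_r e0 (1 / 2)).
  assert (He1 : 0 <= eps < 1) by lra.
  destruct (ex_T_lub_exists n D Hn HD eps He1) as [sT HsT].
  destruct (ex_C_lub_exists n D Hn HD eps He1) as [sC HsC].
  specialize (Hs eps ltac:(lra) sC sT HsC HsT).
  pose proof (ex_sup_err_ge n D Hn HD eps sC ltac:(lra) HsC) as HC.
  pose proof (ex_T_sup_err_le n D Hn HD eps sT He1 HsT) as HT. fold GT in HT.
  pose proof (sup_err_ge_scale n (ex_phys D) ex_DT ex_T eps sT (ex_T_nonzero n D Hn HD) ltac:(lra) HsT).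
  pose proof (pow_R1_Rle (1 + eps) n ltac:(lra)).
  assert (c * sT <= cp * sT) by (apply Rmult_le_compat_r; lra).
  assert (cp * sT <= cp * (eps * (1 + eps * GT) * INR n)) by (apply Rmult_le_compat_l; lra).
  assert (K * eps ^ 2 <= Rabs K * eps ^ 2) by (apply Rmult_le_compat_r; [apply pow2_ge_0 | apply Rle_abs]).
  change (eps * F <= sC) in HC. rewrite <- Hfn in HC.
  assert (eps * (eps * (cp * INR n * GT + Rabs K)) < eps * (INR n * (factor n D - cp)))
    by (apply Rmult_lt_compat_l; lra).
  lra.
Qed.

Theorem mainTheorem13 :
  (forall (n : nat) (d DT : nat -> nat) (T : mps) (DC : nat -> nat) (C : mps)
          (D : nat),
     (1 <= n)%nat ->
     bonds_ok n DT -> bonds_ok n DC ->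
     nonzero_contraction n d DT T ->
     same_contraction n d DC C DT T ->
     left_canonical n d DC C ->
     (forall j, (1 <= j)%nat -> (j <= n - 1)%nat -> (DC j <= D)%nat) ->
     sup_bound_up_to_O_eps2 n d DC C DT T (factor n D))
  /\
  (forall (n D : nat), (1 <= n)%nat -> (1 <= D)%nat ->
     forall c : R, c < factor n D ->
       exists (d DT : nat -> nat) (T : mps) (DC : nat -> nat) (C : mps),
         bonds_ok n DT /\ bonds_ok n DC /\
         nonzero_contraction n d DT T /\
         same_contraction n d DC C DT T /\
         left_canonical n d DC C /\
         (forall j, (1 <= j)%nat -> (j <= n - 1)%nat -> DC j = D) /\
         ~ sup_bound_up_to_O_eps2 n d DC C DT T c).
Proof.
  split.
  (* The lower bound n eps on the errors of T only needs its contraction to be nonzero. *)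
  - intros n d DT T DC C D Hn _ HbC Hnz _ HL HD.
    exact (canonical_error_bound n d DT T DC C D Hn HbC Hnz HL HD).
  - intros n D Hn HD c Hc.
    exists (ex_phys D), ex_DT, ex_T, (ex_DC n D), (ex_C n).
    split; [apply ex_T_bonds |].
    split; [apply ex_C_bonds |].
    split; [apply ex_T_nonzero; auto |].
    split; [apply ex_same_contraction; auto |].
    split; [apply ex_C_canonical; auto |].
    split; [intros; apply ex_DC_inner; lia |].
    apply canonical_error_bound_sharp; auto.
Qed.
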